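(* Let $0<k\le1$. (i) The system $$R(\bar{x};\underline{x},\bar{x})=\tfrac1k,\qquad J'(\bar{x}-;\underline{x},\bar{x})=1$$ has a unique solution $(\underline{x},\bar{x})$ with $\bar{x}>\underline{x}\ge0$, and it satisfies $0\le\underline{x}<x^*<\bar{x}$. Moreover, if $k=1$ then $\underline{x}=0$, and if $k<1$ then $\underline{x}>0$. (ii) For this unique solution, $\bar{x}$ satisfies the equation $J'\big(\bar{x}-;\bar{x}-k\tfrac{g(\bar{x})}{g'(\bar{x})},\bar{x}\big)=1$ and $\underline{x}=\bar{x}-k\frac{g(\bar{x})}{g'(\bar{x})}$. (iii) The equation in (ii) is equivalent to $g\big(\bar{x}-k\tfrac{g(\bar{x})}{g'(\bar{x})}\big)=(1-k)g(\bar{x})$.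
   Context: Fix $r>0$ and $\mu,\sigma:\mathbb{R}\to\mathbb{R}$ satisfying: (A.1) $\mu,\sigma$ are continuously differentiable and Lipschitz continuous, and $\mu',\sigma'$ are Lipschitz continuous; (A.2) $\sigma^2(x)>0$ for $x\ge0$; (A.3) $\mu'(x)<r$ for $x\ge0$; (A.4) there are $\varepsilon>0$, $x_a\ge0$ with $\mu'(x)<r-\varepsilon$ for $x\ge x_a$; (A.5) $\mu(0)>0$. Let $g$ be a canonical solution: $g\in C^2(0,\infty)$, $\mu g'+\frac12\sigma^2g''=rg$ on $(0,\infty)$, $g(0)=0$, $g'(0)>0$; then $g'>0$ on $[0,\infty)$, and $x^*\in(0,\infty)$ denotes the unique point with $g''(x^* )=0$, $g''<0$ on $(0,x^* )$, $g''>0$ on $(x^*,\infty)$. For the surplus $dX_t=\mu(X_t)dt+\sigma(X_t)dW_t-dD_t$, $X_0=x$, with bankruptcy time $\tau=\inf\{t\ge0:X_t\le0\}$, and $\bar{x}>\underline{x}\ge0$, the constant lump sum dividend barrier policy $(\underline{x},\bar{x})$ pays $\bar{x}-\underline{x}$ at the times $\tau_1=\inf\{t>0:X_t\ge\bar{x}\}$, $\tau_n=\inf\{t>\tau_{n-1}:X_t\ge\bar{x}\}$, plus $x-\underline{x}$ at time $0$ if $x\ge\bar{x}$. $J(x;\underline{x},\bar{x})=\mathbb{E}_x\big(\sum_{n:\tau_n\le\tau}e^{-r\tau_n}\zeta_n\big)$ and $R(x;\underline{x},\bar{x})=\mathbb{E}_x\big(\sum_{n:\tau_n\le\tau}e^{-r\tau_n}\big)$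 for this policy ($\zeta_n$ the dividends); explicitly $J(x;\underline{x},\bar{x})=g(x)\frac{\bar{x}-\underline{x}}{g(\bar{x})-g(\underline{x})}$, $R(x;\underline{x},\bar{x})=\frac{g(x)}{g(\bar{x})-g(\underline{x})}$ for $0\le x\le\bar{x}$. $J'$ denotes the derivative in $x$ and $J'(\bar{x}-;\cdot)$ the left derivative at $\bar{x}$. *)

From Stdlib Require Import Reals.
From Coquelicot Require Import Coquelicot.
Open Scope R_scope.

Definition lipschitz (f : R -> R) : Prop :=
  exists L : R, forall x y : R, Rabs (f x - f y) <= L * Rabs (x - y).

(* Explicit value functions of the lump sum barrier policy (xl, xu),
   valid for 0 <= x <= xu (as given in the paper):
   J(x; xl, xu) = g(x) (xu - xl) / (g(xu) - g(xl)),
   R(x; xl, xu) = g(x) / (g(xu) - g(xl)). *)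
Definition Jval (g : R -> R) (xl xu x : R) : R :=
  g x * (xu - xl) / (g xu - g xl).
Definition Rval (g : R -> R) (xl xu x : R) : R :=
  g x / (g xu - g xl).

Definition has_left_deriv (f : R -> R) (x l : R) : Prop :=
  filterlim (fun y => (f y - f x) / (y - x)) (at_left x) (locally l).

Definition has_right_deriv (f : R -> R) (x l : R) : Prop :=
  filterlim (fun y => (f y - f x) / (y - x)) (at_right x) (locally l).

Definition barrier_system (g : R -> R) (k xl xu : R) : Prop :=
  0 <= xl /\ xl < xu /\
  Rval g xl xu xu = 1 / k /\
  has_left_deriv (Jval g xl xu) xu 1.

(* The two equations say that g(xl) = (1 - k) g(xu) and that the tangent to g at
   xu passes through (xl, g(xl)); together they give xl = xu - k g(xu)/g'(xu).
   Because g is increasing, concave on (0, x* ) and convex beyond, such a tangent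
   contact forces xl < x* < xu.  If two solutions had xu < yu, monotonicity of g
   would give xl <= yl, but left of xu the tangent at yu lies below the tangent at
   xu while concavity keeps g above the latter on [xl, x*], so yl cannot be a
   contact point.  For existence, the gap g(xu - k g/g') - (1 - k) g(xu) is
   negative at x* and nonnegative at any x1 > x* whose tangent meets the axis in
   [0, x1].  Such an x1 exists: otherwise g' stays bounded, whereas the ODE, with
   the drift margin of (A.4) and the linear growth of sigma, gives g'' >= c/x and
   hence g' >= c log x. *)

From Stdlib Require Import Reals Lra Ranalysis5 Classical.
From Coquelicot Require Import Coquelicot.
Open Scope R_scope.
Set Bullet Behavior "Strict Subproofs".

Lemma is_derive_continuity_pt (f : R -> R) (x l : R) :
  is_derive f x l -> continuity_pt f x.
Proof.
  intros H. apply continuity_pt_filterlim.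
  apply (ex_derive_continuous f x). now exists l.
Qed.

Lemma MVT_open (f df : R -> R) (a b : R) : a < b ->
  (forall c, a < c < b -> is_derive f c (df c)) ->
  (forall c, a <= c <= b -> continuity_pt f c) ->
  exists c, a < c < b /\ f b - f a = df c * (b - a).
Proof.
  intros Hab Hd Hc.
  pose (pr := fun c (P : a < c < b) =>
    exist (fun l => derivable_pt_abs f c l) (df c) (proj1 (is_derive_Reals _ _ _) (Hd c P))).
  destruct (MVT f id a b pr (fun c _ => derivable_pt_id c) Hab Hc
    (fun c _ => derivable_continuous_pt _ _ (derivable_pt_id c))) as [c [P E]].
  exists c; split; [exact P|].
  rewrite derive_pt_id in E.
  replace (derive_pt f c (pr c P)) with (df c) in E.
  - unfold id in E. lra.
  - symmetry. apply derive_pt_eq_0, is_derive_Reals, Hd. exact P.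
Qed.

Lemma has_right_deriv_continuous (f : R -> R) (x l : R) :
  has_right_deriv f x l -> filterlim f (at_right x) (locally (f x)).
Proof.
  intros H.
  assert (Hdx : filterlim (fun y => y - x) (at_right x) (locally 0)).
  { apply filterlim_locally. intros eps. exists eps. intros y Hy _.
    change (Rabs (y - x - 0) < eps). now rewrite Rminus_0_r. }
  assert (Hprod : filterlim (fun y => (y - x) * ((f y - f x) / (y - x)))
                    (at_right x) (locally (0 * l))).
  { exact (filterlim_comp_2 _ _ Rmult Hdx H (filterlim_mult 0 l)). }
  rewrite Rmult_0_l in Hprod.
  apply filterlim_ext_loc with (fun y => f x + (y - x) * ((f y - f x) / (y - x))).
  { exists (mkposreal 1 Rlt_0_1). intros y _ Hy. field. lra. }
  replace (locally (f x)) with (locally (f x + 0)) by (now rewrite Rplus_0_r).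
  exact (filterlim_comp_2 _ _ Rplus (filterlim_const (f x)) Hprod (filterlim_plus (f x) 0)).
Qed.

Lemma continuity_pt_Rmax_clamp (f : R -> R) (a : R) :
  (forall x, a < x -> continuity_pt f x) ->
  filterlim f (at_right a) (locally (f a)) ->
  forall y, continuity_pt (fun z => f (Rmax a z)) y.
Proof.
  intros Hc Hr y. apply continuity_pt_filterlim.
  destruct (Rlt_or_le a y) as [Hay|Hya].
  - rewrite Rmax_right by lra.
    apply filterlim_ext_loc with f.
    + exists (mkposreal (y - a) ltac:(lra)). intros z Hz. simpl in Hz.
      change (Rabs (z - y) < y - a) in Hz. apply Rabs_lt_between' in Hz.
      now rewrite Rmax_right by lra.
    + now apply continuity_pt_filterlim, Hc.
  - rewrite Rmax_left by lra.
    apply filterlim_locally. intros eps.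
    destruct (proj1 (filterlim_locally _ _) Hr eps) as [d Hd].
    exists d. intros z Hz.
    destruct (Rlt_or_le a z) as [Haz|Hza].
    + rewrite Rmax_right by lra. apply Hd; [|exact Haz].
      change (Rabs (z - a) < d). change (Rabs (z - y) < d) in Hz.
      apply Rabs_lt_between' in Hz. apply Rabs_lt_between'. lra.
    + rewrite Rmax_left by lra. apply ball_center.
Qed.

Lemma MVT_right_closed (f df : R -> R) (a : R) :
  (forall x, a < x -> is_derive f x (df x)) ->
  filterlim f (at_right a) (locally (f a)) ->
  forall u v, a <= u < v -> exists c, u < c < v /\ f v - f u = df c * (v - u).
Proof.
  intros Hd Hr u v [Hau Huv].
  assert (Hc : forall x, a < x -> continuity_pt f x)
    by (intros x Hx; exact (is_derive_continuity_pt _ _ _ (Hd x Hx))).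
  destruct (MVT_open (fun z => f (Rmax a z)) df u v Huv) as [c [Hcuv E]].
  - intros c Hcuv. apply is_derive_ext_loc with f; [|apply Hd; lra].
    exists (mkposreal (c - a) ltac:(lra)). intros z Hz. simpl in Hz.
    change (Rabs (z - c) < c - a) in Hz. apply Rabs_lt_between' in Hz.
    now rewrite Rmax_right by lra.
  - intros c _. exact (continuity_pt_Rmax_clamp f a Hc Hr c).
  - exists c. split; [exact Hcuv|]. now rewrite !Rmax_right in E by lra.
Qed.

Lemma left_deriv_Jval (g : R -> R) (dg xl xu l : R) : is_derive g xu dg ->
  (has_left_deriv (Jval g xl xu) xu l <-> l = (xu - xl) / (g xu - g xl) * dg).
Proof.
  intros Hd.
  set (c := (xu - xl) / (g xu - g xl)).
  assert (Hq : filterlim (fun y => (g y - g xu) / (y - xu)) (at_left xu) (locally dg)).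
  { apply is_derive_Reals in Hd.
    apply filterlim_locally. intros eps.
    destruct (Hd eps (cond_pos eps)) as [d Hdd].
    exists d. intros y Hy Hyb.
    change (Rabs (y - xu) < d) in Hy.
    change (Rabs ((g y - g xu) / (y - xu) - dg) < eps).
    specialize (Hdd (y - xu)). rewrite (Rplus_minus xu y) in Hdd.
    apply Hdd; [lra | exact Hy]. }
  assert (HJ : filterlim (fun y => (Jval g xl xu y - Jval g xl xu xu) / (y - xu))
                 (at_left xu) (locally (c * dg))).
  { eapply filterlim_ext.
    2: { eapply filterlim_comp. exact Hq. apply (filterlim_scal_r c dg). }
    intros y. unfold Jval, c, scal; simpl. unfold mult; simpl. unfold Rdiv. ring. }
  split.
  - intros H. exact (filterlim_locally_unique _ _ _ H HJ).
  - intros ->. exact HJ.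
Qed.

Lemma le_linear_of_deriv_le (f df : R -> R) (a L : R) :
  (forall x, is_derive f x (df x)) -> (forall x, a <= x -> df x <= L) ->
  forall x, a <= x -> f x <= f a + L * (x - a).
Proof.
  intros Hd HL x Hx.
  destruct (MVT_gen f a x df) as [c [Hc E]].
  - intros; apply Hd.
  - intros; apply (is_derive_continuity_pt _ _ _ (Hd _)).
  - rewrite Rmin_left, Rmax_right in Hc by lra.
    assert (df c * (x - a) <= L * (x - a)) by (apply Rmult_le_compat_r; [lra | apply HL; lra]).
    lra.
Qed.

Lemma eventually_linear_margin (mu dmu : R -> R) (r eps xa : R) :
  (forall x, is_derive mu x (dmu x)) -> 0 < eps -> (forall x, xa <= x -> dmu x < r - eps) ->
  exists X, forall x, X <= x -> eps / 2 * x <= r * x - mu x.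
Proof.
  intros Hd Heps Hdmu.
  set (C := (r - eps) * xa - mu xa).
  exists (Rmax xa (2 * Rabs C / eps)). intros x Hx.
  assert (Hxa := Rmax_l xa (2 * Rabs C / eps)).
  assert (HxC := Rmax_r xa (2 * Rabs C / eps)).
  assert (Hmu : mu x <= mu xa + (r - eps) * (x - xa)).
  { apply (le_linear_of_deriv_le mu dmu); [exact Hd | | lra].
    intros y Hy. left. now apply Hdmu. }
  assert (eps / 2 * (2 * Rabs C / eps) = Rabs C) by (field; lra).
  assert (eps / 2 * (2 * Rabs C / eps) <= eps / 2 * x) by (apply Rmult_le_compat_l; lra).
  pose proof (Rle_abs (- C)). rewrite Rabs_Ropp in *.
  unfold C in *. lra.
Qed.

Lemma lipschitz_sq_le (f : R -> R) :
  lipschitz f -> exists K, 0 < K /\ forall x, 1 <= x -> f x ^ 2 <= K * x ^ 2.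
Proof.
  intros [L HL].
  set (A := Rabs (f 0) + Rabs L + 1).
  assert (HA : 1 <= A) by (unfold A; pose proof (Rabs_pos (f 0)); pose proof (Rabs_pos L); lra).
  exists (A ^ 2). split; [nra|]. intros x Hx.
  assert (Hfx : Rabs (f x) <= A * x).
  { pose proof (HL x 0) as H. rewrite Rminus_0_r, (Rabs_pos_eq x) in H by lra.
    pose proof (Rabs_triang_inv (f x) (f 0)).
    pose proof (Rle_abs L). pose proof (Rabs_pos L). pose proof (Rabs_pos (f 0)).
    unfold A. nra. }
  rewrite <- pow2_abs. pose proof (Rabs_pos (f x)). nra.
Qed.

Lemma unbounded_of_deriv_ge_inv (f df : R -> R) (X c : R) : 0 < X -> 0 < c ->
  (forall y, X <= y -> is_derive f y (df y)) -> (forall y, X <= y -> c <= df y * y) ->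
  forall M, exists x, X <= x /\ M <= f x.
Proof.
  intros HX Hc Hd Hdf M.
  assert (Hlog : forall v, X <= v -> f X + c * (ln v - ln X) <= f v).
  { intros v Hv.
    assert (Hphi : forall y, X <= y ->
              is_derive (fun y => f y - c * ln y) y (df y - c * / y)).
    { intros y Hy. apply (is_derive_minus f (fun y => c * ln y)); [now apply Hd|].
      apply is_derive_scal, is_derive_ln. lra. }
    destruct (MVT_gen (fun y => f y - c * ln y) X v (fun y => df y - c * / y)) as [z [Hz E]].
    - intros y Hy. rewrite Rmin_left, Rmax_right in Hy by lra. apply Hphi. lra.
    - intros y Hy. rewrite Rmin_left, Rmax_right in Hy by lra.
      exact (is_derive_continuity_pt _ _ _ (Hphi y ltac:(lra))).
    - rewrite Rmin_left, Rmax_right in Hz by lra.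
      assert (c * / z <= df z).
      { apply (Rmult_le_reg_r z); [lra|]. rewrite Rmult_assoc, Rinv_l by lra.
        specialize (Hdf z ltac:(lra)). lra. }
      assert (0 <= (df z - c * / z) * (v - X)) by (apply Rmult_le_pos; lra).
      simpl in E. lra. }
  set (x := X * exp (Rabs (M - f X) / c)).
  assert (Hlx : ln x - ln X = Rabs (M - f X) / c).
  { unfold x. rewrite ln_mult, ln_exp by (try apply exp_pos; lra). ring. }
  assert (HXx : X <= x).
  { unfold x. pose proof (exp_ineq1_le (Rabs (M - f X) / c)).
    assert (0 <= Rabs (M - f X) / c) by (apply Rdiv_le_0_compat; [apply Rabs_pos | lra]).
    nra. }
  exists x. split; [exact HXx|].
  pose proof (Hlog x HXx) as H. rewrite Hlx in H.
  replace (c * (Rabs (M - f X) / c)) with (Rabs (M - f X)) in H by (field; lra).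
  pose proof (Rle_abs (M - f X)). lra.
Qed.

Section ConcaveConvex.

Context {g g1 g2 : R -> R} {xstar : R}.
Hypothesis g_deriv : forall x, 0 < x -> is_derive g x (g1 x).
Hypothesis g1_deriv : forall x, 0 < x -> is_derive g1 x (g2 x).
Hypothesis g_cont0 : filterlim g (at_right 0) (locally (g 0)).
Hypothesis g_0 : g 0 = 0.
Hypothesis g1_pos : forall x, 0 <= x -> 0 < g1 x.
Hypothesis xstar_pos : 0 < xstar.
Hypothesis g2_neg : forall x, 0 < x < xstar -> g2 x < 0.
Hypothesis g2_pos : forall x, xstar < x -> 0 < g2 x.

Lemma g_MVT u v : 0 <= u < v -> exists c, u < c < v /\ g v - g u = g1 c * (v - u).
Proof. exact (MVT_right_closed g g1 0 g_deriv g_cont0 u v). Qed.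

Lemma g1_MVT u v : 0 < u < v -> exists c, u < c < v /\ g1 v - g1 u = g2 c * (v - u).
Proof.
  intros Huv. apply MVT_open; [lra | intros c Hc; apply g1_deriv; lra |].
  intros c Hc. apply (is_derive_continuity_pt _ _ _ (g1_deriv c ltac:(lra))).
Qed.

Lemma g_lt u v : 0 <= u < v -> g u < g v.
Proof.
  intros Huv. destruct (g_MVT u v Huv) as [c [Hc E]].
  pose proof (g1_pos c ltac:(lra)). nra.
Qed.

Lemma g_pos x : 0 < x -> 0 < g x.
Proof. intros Hx. rewrite <- g_0. apply g_lt. lra. Qed.

Lemma g1_lt_convex u v : xstar <= u < v -> g1 u < g1 v.
Proof.
  intros Huv. destruct (g1_MVT u v ltac:(lra)) as [c [Hc E]].
  pose proof (g2_pos c ltac:(lra)). nra.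
Qed.

Lemma g1_gt_concave u v : 0 < u < v -> v <= xstar -> g1 v < g1 u.
Proof.
  intros Huv Hv. destruct (g1_MVT u v Huv) as [c [Hc E]].
  pose proof (g2_neg c ltac:(lra)). nra.
Qed.

Definition tangent (b y : R) : R := g b + g1 b * (y - b).

Lemma g_lt_tangent_concave b y : 0 <= y < b -> b <= xstar -> g y < tangent b y.
Proof.
  intros Hy Hb. unfold tangent. destruct (g_MVT y b Hy) as [c [Hc E]].
  pose proof (g1_gt_concave c b ltac:(lra) Hb).
  assert (0 < (g1 c - g1 b) * (b - y)) by (apply Rmult_lt_0_compat; lra). nra.
Qed.

Lemma tangent_lt_g_convex b y : xstar <= y < b -> tangent b y < g y.
Proof.
  intros Hy. unfold tangent. destruct (g_MVT y b ltac:(lra)) as [c [Hc E]].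
  pose proof (g1_lt_convex c b ltac:(lra)).
  assert (0 < (g1 b - g1 c) * (b - y)) by (apply Rmult_lt_0_compat; lra). nra.
Qed.

(* Concavity of [g - tangent b] on [[a, xstar]]. *)
Lemma tangent_lt_g_between b a y : 0 <= a < y -> y < xstar ->
  tangent b a <= g a -> tangent b xstar < g xstar -> tangent b y < g y.
Proof.
  unfold tangent. intros Hay Hy Ha Hs.
  destruct (g_MVT a y Hay) as [c1 [Hc1 E1]].
  destruct (g_MVT y xstar ltac:(lra)) as [c2 [Hc2 E2]].
  pose proof (g1_gt_concave c1 c2 ltac:(lra) ltac:(lra)).
  apply Rnot_le_lt. intros Hd.
  assert (g1 c1 <= g1 b).
  { apply Rnot_lt_le. intros H'.
    assert (0 < (g1 c1 - g1 b) * (y - a)) by (apply Rmult_lt_0_compat; lra). nra. }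
  assert ((g1 c2 - g1 b) * (xstar - y) < 0) by (apply Rmult_neg_pos; lra).
  nra.
Qed.

Lemma tangent_le_g_of_root b y : xstar < b -> tangent b 0 <= 0 -> 0 <= y < b ->
  tangent b y <= g y.
Proof.
  intros Hb Hroot Hy.
  destruct (Rlt_or_le y xstar) as [Hys|Hys].
  2: { left. apply tangent_lt_g_convex. lra. }
  assert (H0 : tangent b 0 <= g 0) by (rewrite g_0; exact Hroot).
  destruct (Req_dec y 0) as [->|Hy0]; [exact H0|].
  left. apply (tangent_lt_g_between b 0); [lra | exact Hys | exact H0 |].
  apply tangent_lt_g_convex. lra.
Qed.

Lemma contact_location a b : 0 <= a < b -> g a = tangent b a -> a < xstar < b.
Proof.
  intros Hab Ha. split.
  - apply Rnot_le_lt. intros Hs.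
    pose proof (tangent_lt_g_convex b a ltac:(lra)). lra.
  - apply Rnot_le_lt. intros Hs.
    pose proof (g_lt_tangent_concave b a Hab Hs). lra.
Qed.

Lemma contacts_not_crossing a a' b b' : 0 <= a <= a' -> a' < xstar -> xstar < b < b' ->
  g a = tangent b a -> g a' = tangent b' a' -> False.
Proof.
  intros Ha Ha' Hb Hca Hca'.
  assert (Hbelow : g a' < tangent b a').
  { rewrite Hca'. unfold tangent.
    destruct (g_MVT b b' ltac:(lra)) as [c [Hc E]].
    pose proof (g1_lt_convex c b' ltac:(lra)). pose proof (g1_lt_convex b b' ltac:(lra)).
    assert (0 < (g1 b' - g1 c) * (b' - b)) by (apply Rmult_lt_0_compat; lra).
    assert (0 < (g1 b' - g1 b) * (b - a')) by (apply Rmult_lt_0_compat; lra).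
    nra. }
  assert (Habove : tangent b a' <= g a').
  { destruct (Req_dec a a') as [<-|Hne]; [lra|].
    left. apply (tangent_lt_g_between b a); [lra | exact Ha' | lra |].
    apply tangent_lt_g_convex. lra. }
  lra.
Qed.

Definition lower_barrier (k xu : R) : R := xu - k * g xu / g1 xu.

Lemma tangent_lower_barrier k xu : 0 <= xu -> tangent xu (lower_barrier k xu) = (1 - k) * g xu.
Proof.
  intros Hxu. pose proof (g1_pos xu Hxu). unfold tangent, lower_barrier. field. lra.
Qed.

Lemma lower_barrier_lt k xu : 0 < k -> 0 < xu -> lower_barrier k xu < xu.
Proof.
  intros Hk Hxu. unfold lower_barrier.
  assert (0 < k * g xu / g1 xu); [|lra].
  apply Rdiv_lt_0_compat; [apply Rmult_lt_0_compat; [lra | now apply g_pos] | apply g1_pos; lra].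
Qed.

Lemma left_deriv_Jval_one xl xu : 0 <= xl < xu ->
  (has_left_deriv (Jval g xl xu) xu 1 <-> g xl = tangent xu xl).
Proof.
  intros Hx. pose proof (g_lt xl xu Hx) as Hgx.
  rewrite (left_deriv_Jval g (g1 xu) xl xu 1 (g_deriv xu ltac:(lra))).
  unfold tangent. split; intros H.
  - assert (g xu - g xl = (xu - xl) * g1 xu); [|lra].
    rewrite <- (Rmult_1_r (g xu - g xl)), H. field. lra.
  - pose proof (g1_pos xu ltac:(lra)).
    rewrite H. field. repeat split; lra.
Qed.

Lemma Rval_eq_inv k xl xu : 0 < k -> 0 <= xl < xu ->
  (Rval g xl xu xu = 1 / k <-> g xl = (1 - k) * g xu).
Proof.
  intros Hk Hx. pose proof (g_lt xl xu Hx) as Hgx. unfold Rval. split; intros H.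
  - assert (k * g xu = g xu - g xl); [|lra].
    replace (g xu) with (1 / k * (g xu - g xl)) at 1 by (rewrite <- H; field; lra).
    field. lra.
  - rewrite H. field. split; lra.
Qed.

Lemma barrier_system_iff k xl xu : 0 < k ->
  barrier_system g k xl xu <->
  0 < xu /\ 0 <= xl /\ xl = lower_barrier k xu /\ g xl = (1 - k) * g xu.
Proof.
  intros Hk. unfold barrier_system. split.
  - intros (Hxl & Hlt & HR & HJ).
    apply (Rval_eq_inv k) in HR; [|lra|lra].
    apply left_deriv_Jval_one in HJ; [|lra].
    repeat split; try lra.
    pose proof (g1_pos xu ltac:(lra)).
    unfold tangent in HJ. unfold lower_barrier.
    apply (Rmult_eq_reg_l (g1 xu)); [|lra].
    replace (g1 xu * (xu - k * g xu / g1 xu)) with (g1 xu * xu - k * g xu) by (field; lra).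
    lra.
  - intros (Hxu & Hxl & -> & Hg).
    pose proof (lower_barrier_lt k xu Hk Hxu).
    repeat split; try lra.
    + now apply Rval_eq_inv.
    + apply left_deriv_Jval_one; [lra|]. rewrite tangent_lower_barrier; lra.
Qed.

Lemma barrier_contact k xl xu : 0 < k -> barrier_system g k xl xu ->
  0 <= xl < xu /\ g xl = tangent xu xl.
Proof.
  intros Hk H. destruct (proj1 (barrier_system_iff k xl xu Hk) H) as (Hxu & Hxl & -> & Hg).
  pose proof (lower_barrier_lt k xu Hk Hxu).
  split; [lra|]. rewrite tangent_lower_barrier; lra.
Qed.

Lemma barrier_location k xl xu : 0 < k -> barrier_system g k xl xu -> xl < xstar < xu.
Proof.
  intros Hk H. destruct (barrier_contact k xl xu Hk H) as [Hx Hc].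
  exact (contact_location xl xu Hx Hc).
Qed.

Lemma barrier_upper_not_lt k xl xu yl yu : 0 < k <= 1 ->
  barrier_system g k xl xu -> barrier_system g k yl yu -> ~ xu < yu.
Proof.
  intros Hk Hx Hy Hlt.
  destruct (barrier_contact k xl xu ltac:(lra) Hx) as [Hxlu Hcx].
  destruct (barrier_contact k yl yu ltac:(lra) Hy) as [Hylu Hcy].
  pose proof (contact_location xl xu Hxlu Hcx).
  pose proof (contact_location yl yu Hylu Hcy).
  destruct (proj1 (barrier_system_iff k xl xu ltac:(lra)) Hx) as (_ & _ & _ & Hgx).
  destruct (proj1 (barrier_system_iff k yl yu ltac:(lra)) Hy) as (_ & _ & _ & Hgy).
  assert (Hl : xl <= yl).
  { apply Rnot_lt_le. intros Hyx.
    pose proof (g_lt yl xl ltac:(lra)). pose proof (g_lt xu yu ltac:(lra)).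
    assert (0 <= (1 - k) * (g yu - g xu)) by (apply Rmult_le_pos; lra).
    lra. }
  exact (contacts_not_crossing xl yl xu yu ltac:(lra) ltac:(lra) ltac:(lra) Hcx Hcy).
Qed.

Lemma barrier_unique k xl xu yl yu : 0 < k <= 1 ->
  barrier_system g k xl xu -> barrier_system g k yl yu -> yl = xl /\ yu = xu.
Proof.
  intros Hk Hx Hy.
  pose proof (barrier_upper_not_lt k xl xu yl yu Hk Hx Hy).
  pose proof (barrier_upper_not_lt k yl yu xl xu Hk Hy Hx).
  assert (Hu : yu = xu) by lra.
  destruct (proj1 (barrier_system_iff k xl xu ltac:(lra)) Hx) as (_ & _ & -> & _).
  destruct (proj1 (barrier_system_iff k yl yu ltac:(lra)) Hy) as (_ & _ & -> & _).
  now rewrite Hu.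
Qed.

Lemma lower_barrier_left_deriv k xu : 0 < k -> 0 < xu -> 0 <= lower_barrier k xu ->
  (has_left_deriv (Jval g (lower_barrier k xu) xu) xu 1 <->
   g (lower_barrier k xu) = (1 - k) * g xu).
Proof.
  intros Hk Hxu Hlb. pose proof (lower_barrier_lt k xu Hk Hxu).
  rewrite left_deriv_Jval_one, tangent_lower_barrier by lra. reflexivity.
Qed.

Lemma barrier_lower_eq0_iff k xl xu : 0 < k <= 1 -> barrier_system g k xl xu ->
  (xl = 0 <-> k = 1).
Proof.
  intros Hk H. destruct (proj1 (barrier_system_iff k xl xu ltac:(lra)) H) as (Hxu & Hxl & _ & Hg).
  pose proof (g_pos xu Hxu). split.
  - intros ->. rewrite g_0 in Hg. nra.
  - intros ->. destruct (Rle_lt_or_eq_dec 0 xl Hxl) as [Hpos|Heq]; [|now symmetry].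
    pose proof (g_pos xl Hpos). lra.
Qed.

(* Clamping keeps [g] on its domain, and the last term makes the gap negative
   wherever the lower barrier is negative, so every zero is a genuine solution. *)
Definition barrier_gap (k x : R) : R :=
  g (Rmax 0 (lower_barrier k x)) - (1 - k) * g x
  + (lower_barrier k x - Rabs (lower_barrier k x)).

Lemma barrier_gap_continuous k x : 0 < x -> continuity_pt (barrier_gap k) x.
Proof.
  intros Hx.
  assert (Hgc : forall y, 0 < y -> continuity_pt g y)
    by (intros y Hy; exact (is_derive_continuity_pt _ _ _ (g_deriv y Hy))).
  assert (Hlb : continuity_pt (lower_barrier k) x).
  { apply continuity_pt_minus; [apply continuity_pt_id|].
    apply continuity_pt_div; [apply continuity_pt_scal, Hgc, Hx | |].
    - exact (is_derive_continuity_pt _ _ _ (g1_deriv x Hx)).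
    - pose proof (g1_pos x ltac:(lra)). lra. }
  apply continuity_pt_plus; [apply continuity_pt_minus|].
  - apply (continuity_pt_comp (lower_barrier k) (fun y => g (Rmax 0 y))); [exact Hlb|].
    exact (continuity_pt_Rmax_clamp g 0 Hgc g_cont0 _).
  - apply continuity_pt_scal, Hgc, Hx.
  - apply continuity_pt_minus; [exact Hlb|].
    apply (continuity_pt_comp (lower_barrier k) Rabs); [exact Hlb | apply Rcontinuity_abs].
Qed.

Lemma barrier_gap_zero k xu : 0 < k <= 1 -> 0 < xu -> barrier_gap k xu = 0 ->
  0 <= lower_barrier k xu /\ g (lower_barrier k xu) = (1 - k) * g xu.
Proof.
  intros Hk Hxu. unfold barrier_gap. pose proof (g_pos xu Hxu).
  assert (0 <= (1 - k) * g xu) by (apply Rmult_le_pos; lra).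
  destruct (Rlt_or_le (lower_barrier k xu) 0) as [Hn|Hp].
  - rewrite Rmax_left, Rabs_left, g_0 by lra. lra.
  - rewrite Rmax_right, Rabs_pos_eq by lra. lra.
Qed.

Lemma barrier_gap_xstar_neg k : 0 < k <= 1 -> barrier_gap k xstar < 0.
Proof.
  intros Hk. unfold barrier_gap. pose proof (g_pos xstar xstar_pos).
  assert (0 <= (1 - k) * g xstar) by (apply Rmult_le_pos; lra).
  destruct (Rlt_or_le (lower_barrier k xstar) 0) as [Hn|Hp].
  - rewrite Rmax_left, Rabs_left, g_0 by lra. lra.
  - rewrite Rmax_right, Rabs_pos_eq by lra.
    pose proof (lower_barrier_lt k xstar ltac:(lra) xstar_pos).
    pose proof (g_lt_tangent_concave xstar (lower_barrier k xstar) ltac:(lra) ltac:(lra)).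
    rewrite tangent_lower_barrier in *; lra.
Qed.

Lemma barrier_gap_nonneg_of_root k x1 : 0 < k <= 1 -> xstar < x1 -> tangent x1 0 <= 0 ->
  0 <= barrier_gap k x1.
Proof.
  intros Hk Hx1 Hroot. unfold barrier_gap.
  assert (Hlb : 0 <= lower_barrier k x1).
  { pose proof (g_pos x1 ltac:(lra)). pose proof (g1_pos x1 ltac:(lra)).
    unfold tangent in Hroot. unfold lower_barrier. assert (k * g x1 / g1 x1 <= x1); [|lra].
    apply (Rmult_le_reg_r (g1 x1)); [lra|].
    unfold Rdiv. rewrite Rmult_assoc, Rinv_l by lra. nra. }
  rewrite Rmax_right, Rabs_pos_eq by lra.
  pose proof (lower_barrier_lt k x1 ltac:(lra) ltac:(lra)).
  pose proof (tangent_le_g_of_root x1 (lower_barrier k x1) Hx1 Hroot ltac:(lra)).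
  rewrite tangent_lower_barrier in *; lra.
Qed.

Lemma barrier_exists k : 0 < k <= 1 ->
  (exists x1, xstar < x1 /\ tangent x1 0 <= 0) -> exists xl xu, barrier_system g k xl xu.
Proof.
  intros Hk [x1 [Hx1 Hroot]].
  assert (Hzero : exists xu, xstar <= xu /\ barrier_gap k xu = 0).
  { destruct (Rle_lt_or_eq_dec 0 (barrier_gap k x1)) as [Hpos|Hz].
    - exact (barrier_gap_nonneg_of_root k x1 Hk Hx1 Hroot).
    - destruct (IVT_interv (barrier_gap k) xstar x1) as [xu [Hxu Hz]].
      + intros a Ha. apply barrier_gap_continuous. lra.
      + exact Hx1.
      + exact (barrier_gap_xstar_neg k Hk).
      + exact Hpos.
      + exists xu. split; [lra | exact Hz].
    - exists x1. split; [lra | now symmetry]. }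
  destruct Hzero as [xu [Hxu Hz]].
  destruct (barrier_gap_zero k xu Hk ltac:(lra) Hz) as [Hlb Hg].
  exists (lower_barrier k xu), xu.
  apply barrier_system_iff; [lra|]. repeat split; [lra | exact Hlb | exact Hg].
Qed.

Lemma g1_bounded_of_no_root :
  (forall x, xstar < x -> 0 < tangent x 0) -> forall x, xstar < x -> g1 x * xstar < g xstar.
Proof.
  intros Hno x Hx. destruct (g_MVT xstar x ltac:(lra)) as [c [Hc E]].
  pose proof (g1_lt_convex c x ltac:(lra)). pose proof (Hno x Hx). unfold tangent in *.
  assert (g1 c * (x - xstar) < g1 x * (x - xstar)) by (apply Rmult_lt_compat_r; lra).
  lra.
Qed.

Variables (r eps Xmu : R) (mu sigma : R -> R).
Hypothesis r_pos : 0 < r.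
Hypothesis ode : forall x, 0 < x -> mu x * g1 x + / 2 * sigma x ^ 2 * g2 x = r * g x.
Hypothesis sigma_lipschitz : lipschitz sigma.
Hypothesis eps_pos : 0 < eps.
Hypothesis drift_margin : forall x, Xmu <= x -> eps * x <= r * x - mu x.

Lemma g2_ge_inv_of_no_root : (forall x, xstar < x -> 0 < tangent x 0) ->
  exists X c, xstar < X /\ 0 < c /\ forall x, X <= x -> c <= g2 x * x.
Proof.
  intros Hno.
  destruct (lipschitz_sq_le sigma sigma_lipschitz) as [K [HK HsK]].
  assert (Hm : 0 < g1 xstar) by (apply g1_pos; lra).
  set (X := Rmax (Rmax 1 Xmu) (xstar + 1)).
  assert (HX : 1 <= X /\ Xmu <= X /\ xstar + 1 <= X).
  { unfold X. pose proof (Rmax_l (Rmax 1 Xmu) (xstar + 1)).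
    pose proof (Rmax_r (Rmax 1 Xmu) (xstar + 1)).
    pose proof (Rmax_l 1 Xmu). pose proof (Rmax_r 1 Xmu). lra. }
  exists X, (g1 xstar * eps / K). split; [lra|]. split.
  { apply Rdiv_lt_0_compat; [apply Rmult_lt_0_compat|]; lra. }
  intros x Hx.
  pose proof (ode x ltac:(lra)) as Hode.
  pose proof (Hno x ltac:(lra)). unfold tangent in *.
  pose proof (drift_margin x ltac:(lra)).
  pose proof (g1_lt_convex xstar x ltac:(lra)).
  pose proof (HsK x ltac:(lra)).
  pose proof (g2_pos x ltac:(lra)).
  assert (Hsg : g1 xstar * eps * x <= sigma x ^ 2 * g2 x).
  { assert (r * (x * g1 x) <= r * g x) by (apply Rmult_le_compat_l; lra).
    assert (g1 x * (eps * x) <= g1 x * (r * x - mu x)) by (apply Rmult_le_compat_l; lra).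
    assert (g1 xstar * (eps * x) <= g1 x * (eps * x)) by (apply Rmult_le_compat_r; nra).
    nra. }
  assert (g1 xstar * eps * x <= K * x ^ 2 * g2 x) by nra.
  apply (Rmult_le_reg_r K); [lra|].
  unfold Rdiv. rewrite Rmult_assoc, Rinv_l by lra.
  apply (Rmult_le_reg_r x); [lra|]. nra.
Qed.

Lemma tangent_root_exists : exists x1, xstar < x1 /\ tangent x1 0 <= 0.
Proof.
  apply NNPP. intros Hnone.
  assert (Hno : forall x, xstar < x -> 0 < tangent x 0).
  { intros x Hx. apply Rnot_le_lt. intros Hle. apply Hnone. exists x. lra. }
  destruct (g2_ge_inv_of_no_root Hno) as (X & c & HX & Hc & Hg2).
  destruct (unbounded_of_deriv_ge_inv g1 g2 X c ltac:(lra) Hc) with (M := g xstar / xstar)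
    as (x & Hx & Hbig).
  - intros y Hy. apply g1_deriv. lra.
  - exact Hg2.
  - pose proof (g1_bounded_of_no_root Hno x ltac:(lra)).
    assert (g xstar / xstar * xstar = g xstar) by (field; lra).
    nra.
Qed.

End ConcaveConvex.

Theorem lemma4p4
  (r : R) (mu sigma mu' sigma' : R -> R)
  (g g1 g2 : R -> R) (xstar k : R)
  (* r > 0 *)
  (Hr : 0 < r)
  (* (A.1) *)
  (Hmu_d : forall x, is_derive mu x (mu' x))
  (Hsigma_d : forall x, is_derive sigma x (sigma' x))
  (Hmu'_c : forall x, continuous mu' x)
  (Hsigma'_c : forall x, continuous sigma' x)
  (Hmu_L : lipschitz mu) (Hsigma_L : lipschitz sigma)
  (Hmu'_L : lipschitz mu') (Hsigma'_L : lipschitz sigma')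
  (* (A.2) *)
  (HA2 : forall x, 0 <= x -> 0 < sigma x ^ 2)
  (* (A.3) *)
  (HA3 : forall x, 0 <= x -> mu' x < r)
  (* (A.4) *)
  (HA4 : exists eps xa, 0 < eps /\ 0 <= xa /\ forall x, xa <= x -> mu' x < r - eps)
  (* (A.5) *)
  (HA5 : 0 < mu 0)
  (* g canonical solution: C^2 on (0,oo), g1 = g', g2 = g'' *)
  (Hg_d : forall x, 0 < x -> is_derive g x (g1 x))
  (Hg1_d : forall x, 0 < x -> is_derive g1 x (g2 x))
  (Hg2_c : forall x, 0 < x -> continuous g2 x)
  (Hode : forall x, 0 < x -> mu x * g1 x + / 2 * sigma x ^ 2 * g2 x = r * g x)
  (Hg0 : g 0 = 0)
  (Hg'0 : has_right_deriv g 0 (g1 0))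
  (Hg1_c0 : filterlim g1 (at_right 0) (locally (g1 0)))
  (Hg'0pos : 0 < g1 0)
  (* consequences recorded in the paper's setting *)
  (Hg1pos : forall x, 0 <= x -> 0 < g1 x)
  (Hxstar : 0 < xstar) (Hg2star : g2 xstar = 0)
  (Hconc : forall x, 0 < x < xstar -> g2 x < 0)
  (Hconv : forall x, xstar < x -> 0 < g2 x)
  (* 0 < k <= 1 *)
  (Hk : 0 < k <= 1) :
  (* (i) existence and uniqueness *)
  (exists xl xu, barrier_system g k xl xu /\
     forall yl yu, barrier_system g k yl yu -> yl = xl /\ yu = xu) /\
  (* (i) location, and (ii) *)
  (forall xl xu, barrier_system g k xl xu ->
     xl < xstar < xu /\
     (k = 1 -> xl = 0) /\ (k < 1 -> 0 < xl) /\
     has_left_deriv (Jval g (xu - k * g xu / g1 xu) xu) xu 1 /\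
     xl = xu - k * g xu / g1 xu) /\
  (* (iii) *)
  (forall xu, 0 < xu -> 0 <= xu - k * g xu / g1 xu ->
     (has_left_deriv (Jval g (xu - k * g xu / g1 xu) xu) xu 1 <->
      g (xu - k * g xu / g1 xu) = (1 - k) * g xu)).
Proof.
  pose proof (has_right_deriv_continuous g 0 (g1 0) Hg'0) as g_cont0.
  destruct HA4 as (eps & xa & Heps & _ & Hmu').
  destruct (eventually_linear_margin mu mu' r eps xa Hmu_d Heps Hmu') as [Xmu Hmargin].
  pose proof (barrier_system_iff Hg_d g_cont0 Hg0 Hg1pos) as Hiff.
  pose proof (barrier_unique Hg_d Hg1_d g_cont0 Hg0 Hg1pos Hxstar Hconc Hconv) as Hunique.
  split; [|split].
  - destruct (barrier_exists Hg_d Hg1_d g_cont0 Hg0 Hg1pos Hxstar Hconc Hconv k Hk)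
      as (xl & xu & H).
    { exact (tangent_root_exists Hg_d Hg1_d g_cont0 Hg1pos Hxstar Hconv r (eps / 2) Xmu
               mu sigma Hr Hode Hsigma_L ltac:(lra) Hmargin). }
    exists xl, xu. split; [exact H|].
    intros yl yu Hy. exact (Hunique k xl xu yl yu Hk H Hy).
  - intros xl xu H.
    pose proof (barrier_location Hg_d Hg1_d g_cont0 Hg0 Hg1pos Hxstar Hconc Hconv k xl xu
                  ltac:(lra) H) as Hloc.
    pose proof (barrier_lower_eq0_iff Hg_d g_cont0 Hg0 Hg1pos k xl xu Hk H) as Hzero.
    destruct (proj1 (Hiff k xl xu ltac:(lra)) H) as (_ & Hxl & Hlb & _).
    repeat split; try tauto.
    + intros Hk1. destruct (Rle_lt_or_eq_dec 0 xl Hxl) as [|<-]; [assumption|]. lra.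
    + destruct H as (_ & _ & _ & HJ). rewrite Hlb in HJ. exact HJ.
  - intros xu Hxu Hlb.
    exact (lower_barrier_left_deriv Hg_d g_cont0 Hg0 Hg1pos k xu ltac:(lra) Hxu Hlb).
Qed.
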